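(* For two finite subsets $D_1, D_2 \subset \mathbb{N}$, \[ \alpha(D_1 \cup D_2) \geq \alpha(D_1)\,\alpha(D_2). \]
   Context: For a finite $D \subset \mathbb{N} = \{1,2,\ldots\}$ and $n \geq 1$, the circulant graph $G_n$ with set of distances $D$ has vertex set $\{0, \ldots, n-1\}$, vertices $u, v$ (possibly equal) being adjacent iff $u - v \equiv d$ or $v - u \equiv d \pmod n$ for some $d \in D$. $\alpha(G)$ is the maximum size of an independent set (no two adjacent vertices, no looped vertex), and $\alpha(D) := \lim_{n\to\infty} \alpha(G_n)/n$ (which exists). *)

From mathcomp Require Import all_boot all_order all_algebra.
From mathcomp Require Import all_classical all_reals all_analysis.
Set Implicit Arguments. Unset Strict Implicit. Unset Printing Implicit Defensive.
Import Order.TTheory GRing.Theory Num.Theory.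

(* A finite set of distances D ⊂ ℕ = {1,2,...} is represented by a list of
   positive naturals (duplicates/order irrelevant); union = concatenation. *)
Definition distances (D : seq nat) : bool := all (fun d => 0 < d) D.

Definition circ_adj (D : seq nat) (n : nat) (u v : 'I_n) : bool :=
  has (fun d => (v + d == u %[mod n]) || (u + d == v %[mod n])) D.

Definition circ_indep (D : seq nat) (n : nat) (S : {set 'I_n}) : bool :=
  [forall u in S, forall v in S, ~~ circ_adj D u v].

Definition circ_alpha (D : seq nat) (n : nat) : nat :=
  \max_(S : {set 'I_n} | circ_indep D S) #|S|.

(* The sequence n ↦ α(G_n)/n, whose limit is α(D). *)
Definition alpha_ratio (R : realType) (D : seq nat) (n : nat) : R :=
  ((circ_alpha D n)%:R / n%:R)%R.

(* If S1 is independent in G_n for D1 and S2 is independent in G_m for D2, with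
   n and m coprime, then the set of x mod nm with (x mod n, x mod m) in S1 x S2
   is independent in G_nm for D1 ∪ D2, since reduction mod a divisor preserves
   adjacency; by the Chinese remainder theorem it has |S1||S2| elements.  Hence
   α(G_nm; D1 ∪ D2)/nm >= (α(G_n; D1)/n)(α(G_m; D2)/m), and taking the coprime
   pair n = k+1, m = k+2 and letting k tend to infinity gives the inequality of
   the limits. *)

From mathcomp Require Import all_boot all_order all_algebra.
From mathcomp Require Import all_classical all_reals all_analysis.
Import Order.TTheory GRing.Theory Num.Theory numFieldNormedType.Exports.

Set Implicit Arguments.
Unset Strict Implicit.
Unset Printing Implicit Defensive.

Lemma circ_indep0 D n : circ_indep D (finset.set0 : {set 'I_n}).
Proof. by apply/forall_inP => u; rewrite finset.in_set0. Qed.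

Lemma circ_alpha_attained D n :
  exists2 S : {set 'I_n}, circ_indep D S & circ_alpha D n = #|S|.
Proof.
have nonempty : (0 < #|[pred S : {set 'I_n} | circ_indep D S]|)%N.
  by apply/card_gt0P; exists finset.set0; rewrite inE circ_indep0.
have [S indS alphaS] := eq_bigmax_cond (fun S : {set 'I_n} => #|S|) nonempty.
by exists S.
Qed.

Lemma circ_alpha_ge D n (S : {set 'I_n}) : circ_indep D S -> (#|S| <= circ_alpha D n)%N.
Proof. exact: leq_bigmax_cond. Qed.

Lemma circ_adj_cat D1 D2 n (u v : 'I_n) :
  circ_adj (D1 ++ D2) u v = circ_adj D1 u v || circ_adj D2 u v.
Proof. exact: has_cat. Qed.

Lemma circ_indepI D1 D2 n (A B : {set 'I_n}) :
  circ_indep D1 A -> circ_indep D2 B -> circ_indep (D1 ++ D2) (A :&: B).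
Proof.
move=> /forall_inP indA /forall_inP indB; apply/forall_inP => u /setIP [uA uB].
apply/forall_inP => v /setIP [vA vB]; rewrite circ_adj_cat negb_or.
by rewrite (forall_inP (indA u uA) v vA) (forall_inP (indB u uB) v vB).
Qed.

Definition ord_mod k (x : nat) : 'I_k.+1 := Ordinal (ltn_pmod x (ltn0Sn k)).

Lemma circ_adj_ord_mod D k N (u v : 'I_N) : k.+1 %| N ->
  circ_adj D u v -> circ_adj D (ord_mod k u) (ord_mod k v).
Proof.
move=> dvd_kN; apply: sub_has => d /=.
have reduce x y : x + d == y %[mod N] -> x %% k.+1 + d == y %% k.+1 %[mod k.+1].
  by move=> /eqP xy; rewrite modnDml modn_mod -(modn_dvdm _ dvd_kN) xy (modn_dvdm _ dvd_kN).
by case/orP => /reduce ->; rewrite ?orbT.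
Qed.

Lemma circ_indep_preim_ord_mod D k N (S : {set 'I_k.+1}) : k.+1 %| N ->
  circ_indep D S -> circ_indep D [set x : 'I_N | ord_mod k x \in S].
Proof.
move=> dvd_kN /forall_inP indS; apply/forall_inP => u; rewrite inE => uS.
apply/forall_inP => v; rewrite inE => vS.
by apply: contra (forall_inP (indS _ uS) _ vS); apply: circ_adj_ord_mod.
Qed.

Lemma crt_bijective n m : coprime n.+1 m.+1 ->
  bijective (fun x : 'I_(n.+1 * m.+1) => (ord_mod n x, ord_mod m x)).
Proof.
move=> co; apply: inj_card_bij; last by rewrite card_prod !card_ord.
move=> x y /= [] eq_n eq_m; apply: ord_inj.
by have := chinese_remainder co x y; rewrite eq_n eq_m !eqxx !modn_small // => /eqP.
Qed.

Lemma circ_alpha_mul D1 D2 n m : coprime n.+1 m.+1 ->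
  (circ_alpha D1 n.+1 * circ_alpha D2 m.+1 <=
   circ_alpha (D1 ++ D2) (n.+1 * m.+1))%N.
Proof.
move=> co; pose N := (n.+1 * m.+1)%N.
have [S1 indS1 ->] := circ_alpha_attained D1 n.+1.
have [S2 indS2 ->] := circ_alpha_attained D2 m.+1.
pose S := [set x : 'I_N | ord_mod n x \in S1] :&: [set x : 'I_N | ord_mod m x \in S2].
have indS : circ_indep (D1 ++ D2) S.
  apply: circ_indepI; apply: circ_indep_preim_ord_mod => //.
  - exact/dvdn_mulr/dvdnn.
  - exact/dvdn_mull/dvdnn.
have cardS : #|S| = (#|S1| * #|S2|)%N.
  rewrite -cardsX -(on_card_preimset (onW_bij _ (crt_bijective co))).
  by apply: eq_card => x; rewrite !inE.
by rewrite -cardS; apply: circ_alpha_ge.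
Qed.

Local Open Scope classical_set_scope.
Local Open Scope ring_scope.

Lemma alpha_ratio_mul (R : realType) D1 D2 n m : coprime n.+1 m.+1 ->
  alpha_ratio R D1 n.+1 * alpha_ratio R D2 m.+1 <=
  alpha_ratio R (D1 ++ D2) (n.+1 * m.+1).
Proof.
by move=> co; rewrite /alpha_ratio mulf_div -!natrM ler_pM2r ?ler_nat ?circ_alpha_mul.
Qed.

Lemma cvgn_infty_ge (f : nat -> nat) : (forall k, k <= f k)%N -> f @ \oo --> \oo.
Proof. by move=> ge_f P [n _ Pn]; exists n => // k /= le_nk; apply/Pn/(leq_trans le_nk). Qed.

Theorem proposition5 (R : realType) (D1 D2 : seq nat) (a1 a2 a12 : R) :
  distances D1 -> distances D2 ->
  alpha_ratio R D1 @ \oo --> a1 ->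
  alpha_ratio R D2 @ \oo --> a2 ->
  alpha_ratio R (D1 ++ D2) @ \oo --> a12 ->
  a1 * a2 <= a12.
Proof.
move=> _ _ cvg1 cvg2 cvg12.
have sub1 : (fun k => alpha_ratio R D1 k.+1) @ \oo --> a1.
  exact: cvg_comp (cvgn_infty_ge (fun k => leqnSn k)) cvg1.
have sub2 : (fun k => alpha_ratio R D2 k.+2) @ \oo --> a2.
  by apply: cvg_comp cvg2; apply: cvgn_infty_ge => k; rewrite leqW.
have sub12 : (fun k => alpha_ratio R (D1 ++ D2) (k.+1 * k.+2)) @ \oo --> a12.
  apply: cvg_comp cvg12; apply: cvgn_infty_ge => k.
  by rewrite (leq_trans (leqnSn k)) // leq_pmulr.
apply: ler_cvg_to (cvgM sub1 sub2) sub12 _.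
by near=> k; apply: alpha_ratio_mul; apply: coprimenS.
Unshelve. all: by end_near.
Qed.
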